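(* For every prime power $q$, $M_q\!\left(\frac{q-1}{q+1}\right)<\frac{1}{q+1}$.
   Context: $H_q(x)=x\log_q(q-1)-x\log_q x-(1-x)\log_q(1-x)$ is the $q$-ary entropy and $M_q(\delta)=H_q\!\left(\frac1q\left(q-1-(q-2)\delta-2\sqrt{(q-1)\delta(1-\delta)}\right)\right)$. *)

From Stdlib Require Import Reals ZArith Znumtheory.
Open Scope R_scope.

Definition logb (q x : R) : R := ln x / ln q.

Definition Hq (q x : R) : R :=
  x * logb q (q - 1) - x * logb q x - (1 - x) * logb q (1 - x).

Definition Mq (q d : R) : R :=
  Hq q ((q - 1 - (q - 2) * d - 2 * sqrt ((q - 1) * d * (1 - d))) / q).

Definition prime_power (q : nat) : Prop :=
  exists p k : nat, prime (Z.of_nat p) /\ (1 <= k)%nat /\ q = (p ^ k)%nat.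

From Stdlib Require Import Reals ZArith Znumtheory Lra Lia.
Open Scope R_scope.

(* At delta = (q-1)/(q+1) one has (q-1) delta (1-delta) = 2 delta^2, so M_q(delta) = H_q(x)
   with x = (3 - 2 sqrt 2)(q-1)/(q(q+1)).  Using ln(q-1) <= ln q and -(1-x) ln(1-x) <= x,
   H_q(x) ln q <= x (ln q + ln(1/x) + 1).  Since x(q+1) < 3 - 2 sqrt 2 < 0.172 and ln(1/x) is
   at most 6 ln 2 for q = 2 and at most 3 ln q + 1/3 for q >= 3, this is below ln q/(q+1). *)

Lemma ln_le_sub1 y : 0 < y -> ln y <= y - 1.
Proof.
  intros Hy.
  pose proof (exp_ineq1_le (ln y)) as H.
  rewrite exp_ln in H; lra.
Qed.

Lemma ln_ge_1_sub_inv y : 0 < y -> 1 - / y <= ln y.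
Proof.
  intros Hy.
  pose proof (ln_le_sub1 (/ y) (Rinv_0_lt_compat _ Hy)) as H.
  rewrite ln_Rinv in H; lra.
Qed.

Lemma ln_le x y : 0 < x -> x <= y -> ln x <= ln y.
Proof.
  intros Hx [Hxy | <-]; [left; exact (ln_increasing _ _ Hx Hxy) | lra].
Qed.

Lemma ln_lt_0 x : 0 < x < 1 -> ln x < 0.
Proof. intros Hx; rewrite <- ln_1; apply ln_increasing; lra. Qed.

Lemma neg_mul_ln_1_sub_le x : x < 1 -> - ((1 - x) * ln (1 - x)) <= x.
Proof.
  intros Hx.
  pose proof (ln_ge_1_sub_inv (1 - x) ltac:(lra)) as H.
  assert (Hinv : (1 - x) * (1 - / (1 - x)) = - x) by (field; lra).
  nra.
Qed.

Lemma Hq_mul_ln_le Q x :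
  1 < Q -> 0 < x < 1 -> Hq Q x * ln Q <= x * (ln Q + ln (/ x) + 1).
Proof.
  intros HQ Hx.
  assert (HL : 0 < ln Q) by (rewrite <- ln_1; apply ln_increasing; lra).
  assert (Hexp : Hq Q x * ln Q = x * ln (Q - 1) - x * ln x - (1 - x) * ln (1 - x)).
  { unfold Hq, logb; field; lra. }
  assert (Hlog : x * ln (Q - 1) <= x * ln Q).
  { apply Rmult_le_compat_l; [lra | apply ln_le; lra]. }
  rewrite Hexp, ln_Rinv by lra.
  pose proof (neg_mul_ln_1_sub_le x ltac:(lra)).
  lra.
Qed.

Definition kappa : R := 3 - 2 * sqrt 2.

Lemma kappa_bounds : 1 / 6 < kappa < 172 / 1000.
Proof.
  assert (Hs2 : sqrt 2 * sqrt 2 = 2) by (apply sqrt_sqrt; lra).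
  pose proof Rlt_sqrt2_0.
  unfold kappa; split; nra.
Qed.

Definition ratio_point (Q : R) : R := kappa * (Q - 1) / (Q * (Q + 1)).

Lemma Mq_ratio_eq Q : 1 < Q -> Mq Q ((Q - 1) / (Q + 1)) = Hq Q (ratio_point Q).
Proof.
  intros HQ.
  set (d := (Q - 1) / (Q + 1)).
  assert (Hd : 0 < d) by (apply Rdiv_lt_0_compat; lra).
  assert (Hsqrt : sqrt ((Q - 1) * d * (1 - d)) = sqrt 2 * d).
  { replace ((Q - 1) * d * (1 - d)) with (2 * (d * d)) by (unfold d; field; lra).
    rewrite sqrt_mult, sqrt_square by nra; reflexivity. }
  unfold Mq; rewrite Hsqrt; f_equal.
  unfold ratio_point, kappa, d; field; lra.
Qed.

Lemma ratio_point_bounds Q : 1 < Q -> 0 < ratio_point Q /\ ratio_point Q * (Q + 1) < kappa.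
Proof.
  intros HQ; pose proof kappa_bounds.
  assert (Hx : ratio_point Q * (Q + 1) = kappa * (Q - 1) / Q) by (unfold ratio_point; field; lra).
  split.
  - unfold ratio_point; apply Rdiv_lt_0_compat; nra.
  - rewrite Hx; apply Rmult_lt_reg_r with Q; [lra |].
    unfold Rdiv; rewrite Rmult_assoc, Rinv_l by lra; nra.
Qed.

Lemma inv_ratio_point Q : 1 < Q -> / ratio_point Q = Q * (Q + 1) / (kappa * (Q - 1)).
Proof.
  intros HQ; pose proof kappa_bounds.
  unfold ratio_point; field; repeat split; lra.
Qed.

Lemma ln_inv_ratio_point_2 : ln (/ ratio_point 2) <= 6 * ln 2.
Proof.
  pose proof kappa_bounds.
  rewrite inv_ratio_point by lra.
  replace (6 * ln 2) with (ln (2 ^ 6)) by (rewrite ln_pow by lra; simpl; ring).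
  apply ln_le.
  - apply Rdiv_lt_0_compat; lra.
  - apply Rmult_le_reg_r with (kappa * (2 - 1)); [lra |].
    unfold Rdiv; rewrite Rmult_assoc, Rinv_l, Rmult_1_r by lra; simpl; lra.
Qed.

Lemma ln_inv_ratio_point_ge3 Q : 3 <= Q -> ln (/ ratio_point Q) <= 3 * ln Q + 1 / 3.
Proof.
  intros HQ; pose proof kappa_bounds.
  assert (Hinv : / ratio_point Q <= 4 * Q * Q).
  { rewrite inv_ratio_point by lra.
    apply Rmult_le_reg_r with (kappa * (Q - 1)); [nra |].
    unfold Rdiv; rewrite Rmult_assoc, Rinv_l, Rmult_1_r by nra.
    assert (0 <= (kappa - 1 / 6) * (Q * (Q - 1))) by (apply Rmult_le_pos; nra).
    nra. }
  assert (Hsplit : ln (4 * Q * Q) = ln (4 / Q) + 3 * ln Q).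
  { replace (4 * Q * Q) with (4 / Q * (Q * (Q * Q))) by (field; lra).
    assert (0 < 4 / Q) by (apply Rdiv_lt_0_compat; lra).
    rewrite !ln_mult by nra; ring. }
  assert (H4Q : ln (4 / Q) <= 1 / 3).
  { assert (0 < 4 / Q) by (apply Rdiv_lt_0_compat; lra).
    assert (4 / Q <= 4 / 3).
    { apply Rmult_le_reg_r with Q; [lra |].
      unfold Rdiv; rewrite Rmult_assoc, Rinv_l by lra; nra. }
    pose proof (ln_le_sub1 (4 / Q)); lra. }
  destruct (ratio_point_bounds Q ltac:(lra)) as [Hx0 _].
  pose proof (ln_le _ _ (Rinv_0_lt_compat _ Hx0) Hinv).
  lra.
Qed.

Lemma ratio_point_entropy_lt Q :
  Q = 2 \/ 3 <= Q ->
  ratio_point Q * (ln Q + ln (/ ratio_point Q) + 1) < ln Q / (Q + 1).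
Proof.
  intros HQ.
  assert (HQ1 : 1 < Q) by lra.
  pose proof kappa_bounds.
  destruct (ratio_point_bounds Q HQ1) as [Hx0 Hx].
  assert (Hx1 : ratio_point Q < 1) by nra.
  assert (Hlnx : 0 < ln (/ ratio_point Q)).
  { rewrite ln_Rinv by lra; pose proof (ln_lt_0 (ratio_point Q)); lra. }
  apply Rmult_lt_reg_r with (Q + 1); [lra |].
  replace (ln Q / (Q + 1) * (Q + 1)) with (ln Q) by (field; lra).
  destruct HQ as [-> | HQ3].
  - assert (Hx2 : ratio_point 2 * (2 + 1) = kappa / 2) by (unfold ratio_point; field).
    pose proof ln_inv_ratio_point_2; pose proof ln_lt_2; nra.
  - assert (HL1 : 1 <= ln Q).
    { rewrite <- (ln_exp 1); apply ln_le; [apply exp_pos | pose proof exp_le_3; lra]. }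
    pose proof (ln_inv_ratio_point_ge3 Q HQ3); nra.
Qed.

Lemma Mq_ratio_lt Q : Q = 2 \/ 3 <= Q -> Mq Q ((Q - 1) / (Q + 1)) < 1 / (Q + 1).
Proof.
  intros HQ.
  assert (HQ1 : 1 < Q) by lra.
  assert (HL : 0 < ln Q) by (rewrite <- ln_1; apply ln_increasing; lra).
  pose proof kappa_bounds.
  destruct (ratio_point_bounds Q HQ1) as [Hx0 Hx].
  rewrite Mq_ratio_eq by lra.
  apply Rmult_lt_reg_r with (ln Q); [lra |].
  replace (1 / (Q + 1) * ln Q) with (ln Q / (Q + 1)) by (field; lra).
  eapply Rle_lt_trans; [apply Hq_mul_ln_le; nra | exact (ratio_point_entropy_lt Q HQ)].
Qed.

Lemma prime_power_ge2 q : prime_power q -> (2 <= q)%nat.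
Proof.
  intros [p [k [[Hp _] [Hk ->]]]].
  assert (Hp2 : (2 <= p)%nat) by lia.
  pose proof (Nat.pow_le_mono_r p 1 k ltac:(lia) Hk).
  rewrite Nat.pow_1_r in *; lia.
Qed.

Theorem lemmaA1 (q : nat) (hq : prime_power q) :
  Mq (INR q) ((INR q - 1) / (INR q + 1)) < 1 / (INR q + 1).
Proof.
  apply Mq_ratio_lt.
  destruct (Nat.eq_dec q 2) as [-> | Hq2]; [left; simpl; ring | right].
  pose proof (prime_power_ge2 q hq).
  replace 3 with (INR 3) by (simpl; ring).
  apply le_INR; lia.
Qed.
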